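(* Let $p$ be an odd prime, let $d>1$ be an integer, and let $q$ be an even power of $p$ with $q \equiv 1 \pmod{2d}$. Let $\chi$ be a multiplicative character of $\mathbb{F}_q$ of order $d$. Let $A \subseteq \mathbb{F}_q$ with $|A|=\sqrt{q}$, and for $c \in \mathbb{F}_q^*$ let $S(c)=\sum_{a \in A} e_p\big(\operatorname{Tr}(ac)\big)$. Then $A$ is a maximum clique in $GP(q,d)$ if and only if for every $c \in \mathbb{F}_q^*$ the complex numbers $\chi(c)|S(c)|^2$ and $G(\chi)$ share the same argument. In particular, if $\omega\big(GP(q,d)\big)=\sqrt{q}$, then $\epsilon(\chi)$ is a $d$-th root of unity, the Gauss sum $G(\chi)=\epsilon(\chi)\sqrt{q}$ is pure, and $S(c)=0$ for every $c \in \mathbb{F}_q^*$ with $\chi(c) \neq \epsilon(\chi)$.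
   Context: $GP(q,d)$ is the graph on $\mathbb{F}_q$ in which distinct $x,y$ are adjacent iff $x-y$ is a $d$-th power in $\mathbb{F}_q^*$; $\omega$ denotes clique number. $\operatorname{Tr}$ is the absolute trace $\mathbb{F}_q \to \mathbb{F}_p$, $\operatorname{Tr}(\alpha)=\alpha+\alpha^p+\dots+\alpha^{q/p}$, and $e_p(x)=e^{2\pi i x/p}$ for $x\in\mathbb{F}_p$ (identified with $\{0,\dots,p-1\}$). Multiplicative characters are extended by $\chi(0)=0$. The Gauss sum is $G(\chi)=\sum_{c \in \mathbb{F}_q}\chi(c)e_p(\operatorname{Tr}(c))$, and for nontrivial $\chi$ the normalized Gauss sum is $\epsilon(\chi)=q^{-1/2}G(\chi)$. A Gauss sum is pure if some nonzero integral power of it is a real number. The number $0$ is regarded as sharing the argument of any complex number. *)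

From HB Require Import structures.
From mathcomp Require Import all_boot all_order all_algebra all_field.
From mathcomp Require Import reals trigo complex.
Set Implicit Arguments. Unset Strict Implicit. Unset Printing Implicit Defensive.
Import Order.TTheory GRing.Theory Num.Theory.
Local Open Scope ring_scope.
Local Open Scope complex_scope.

Section GaussDefs.
Variables (R : realType) (F : finFieldType) (p m : nat).
(* #|F| = q = p ^ (2 m) ; the absolute trace has 2m terms *)

Definition absTr (a : F) : F := \sum_(i < 2 * m) a ^+ (p ^ i).

Definition primefield_nat (x : F) : nat :=
  odflt 0%N (omap (@nat_of_ord p) [pick n : 'I_p | (n%:R : F) == x]).

Definition e_p (n : nat) : R[i] :=
  (cos (2 * pi * n%:R / p%:R)) +i* (sin (2 * pi * n%:R / p%:R)).

Definition psi (x : F) : R[i] := e_p (primefield_nat (absTr x)).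

Definition mult_char (chi : F -> R[i]) : Prop :=
  chi 0 = 0 /\ chi 1 = 1 /\ forall x y, chi (x * y) = chi x * chi y.

Definition char_order (chi : F -> R[i]) (d : nat) : Prop :=
  (0 < d)%N /\ (forall x : F, x != 0 -> chi x ^+ d = 1) /\
  (forall k : nat, (0 < k < d)%N -> exists x : F, x != 0 /\ chi x ^+ k != 1).

Definition gauss_sum (chi : F -> R[i]) : R[i] := \sum_(c : F) chi c * psi c.

Definition sqrtq : R[i] := (Num.sqrt (#|F|%:R : R))%:C.

Definition eps_gauss (chi : F -> R[i]) : R[i] := gauss_sum chi / sqrtq.

Definition S_sum (A : {set F}) (c : F) : R[i] := \sum_(a in A) psi (a * c).

End GaussDefs.

Definition gp_adj (F : finFieldType) (d : nat) (x y : F) : Prop :=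
  x != y /\ exists z : F, z != 0 /\ x - y = z ^+ d.

Definition gp_clique (F : finFieldType) (d : nat) (A : {set F}) : Prop :=
  forall x y, x \in A -> y \in A -> x != y -> gp_adj d x y.

Definition gp_max_clique (F : finFieldType) (d : nat) (A : {set F}) : Prop :=
  gp_clique d A /\ forall B : {set F}, gp_clique d B -> (#|B| <= #|A|)%N.

Definition gp_clique_number (F : finFieldType) (d : nat) (w : nat) : Prop :=
  (exists A : {set F}, gp_clique d A /\ #|A| = w) /\
  forall B : {set F}, gp_clique d B -> (#|B| <= w)%N.

Definition same_arg (R : realType) (u v : R[i]) : Prop :=
  u = 0 \/ v = 0 \/ exists r : R, 0 < r /\ u = r%:C * v.

Definition pure_num (R : realType) (z : R[i]) : Prop :=
  exists n : int, n != 0 /\ (z ^ n) \is Num.real.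

(* Write G = G(chi) and z(c) = chi(c) |S(c)|^2.  Expanding |S(c)|^2 and using the
   twisted Gauss sum  sum_c chi(c) psi(x c) = conj(chi(x)) G  gives
     sum_c z(c) = G W,   where W = sum_(a, b in A) chi((a - b)^-1),
   while Parseval gives  sum_c |z(c)| = sum_(c <> 0) |S(c)|^2 = sqrt q (q - sqrt q).
   As |G| = sqrt q and each term of W has modulus at most [a <> b], W can reach
   q - sqrt q only if chi(a - b) = 1 for all a <> b in A, i.e. if A is a clique.
   Hence A is a clique iff |sum_c z(c)| = sum_c |z(c)| with sum_c z(c) a positive
   multiple of G, i.e. iff every z(c) has the argument of G.  A clique B has at most
   sqrt q elements since (a, b) |-> a + nu b is injective on B x B when nu is not a
   d-th power.  Finally, if z(c) = k G with S(c) <> 0, comparing moduli gives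
   chi(c) = G / sqrt q; such a c exists because sum_(c <> 0) |S(c)|^2 > 0, so
   eps(chi)^d = chi(c)^d = 1. *)

From mathcomp Require Import all_boot all_order all_algebra all_field.
From mathcomp Require Import reals trigo complex.
From mathcomp Require Import cyclic ring.
Set Implicit Arguments. Unset Strict Implicit. Unset Printing Implicit Defensive.
Import Order.TTheory GRing.Theory Num.Theory.
Local Open Scope ring_scope.
Local Open Scope complex_scope.

Lemma exists_nonroot (F : finFieldType) (P : {poly F}) :
  P != 0 -> (size P <= #|F|)%N -> exists x, ~~ root P x.
Proof.
move=> P_neq0 sizeP; apply/existsP; apply: contraTT sizeP => /existsPn all_roots.
rewrite -ltnNge cardE; apply: max_poly_roots P_neq0 _ (enum_uniq _).
by apply/allP => x _; rewrite -[root _ _]negbK all_roots.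
Qed.

Lemma mul_fixed_eq0 (R : idomainType) (a s : R) : a != 1 -> a * s = s -> s = 0.
Proof.
move=> a_neq1 /eqP; rewrite -subr_eq0 -{2}[s]mul1r -mulrBl mulf_eq0 subr_eq0.
by rewrite (negbTE a_neq1) => /eqP.
Qed.

Section PrimeSubfield.
Variables (F : finFieldType) (p : nat).
Hypothesis pcharF : p \in [pchar F].

Lemma natr_inj_lt_pchar k j : (k < p)%N -> (j < p)%N -> k%:R = j%:R :> F -> k = j.
Proof.
wlog le_jk : k j / (j <= k)%N.
  move=> wlog_case k_lt_p j_lt_p kj_eq; case/orP: (leq_total j k) => le_kj.
    exact: wlog_case.
  by symmetry; apply: wlog_case.
move=> k_lt_p j_lt_p kj_eq; apply/eqP; have := eqn_mod_dvd p le_jk.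
by rewrite (dvdn_pcharf pcharF) natrB // kj_eq subrr eqxx !modn_small.
Qed.

Lemma frobenius_fixed_natr (y : F) : y ^+ p = y -> exists2 k, (k < p)%N & y = k%:R.
Proof.
move=> y_fixed; have p_gt1 := prime_gt1 (pcharf_prime pcharF).
have [/mapP[k]|y_new] := boolP (y \in [seq k%:R | k <- iota 0 p]).
  by rewrite mem_iota => k_lt_p ->; exists k.
pose P : {poly F} := 'X^p - 'X.
have sizeP : size P = p.+1 by rewrite size_polyDl ?size_polyXn ?size_polyN ?size_polyX.
have : (size (y :: [seq k%:R | k <- iota 0 p]) < size P)%N.
  apply: max_poly_roots; first by rewrite -size_poly_eq0 sizeP.
    rewrite /= /root !hornerE y_fixed subrr eqxx /=.
    apply/allP => _ /mapP[k _ ->].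
    by rewrite /root !hornerE -(pFrobenius_autE pcharF) pFrobenius_aut_nat subrr.
  rewrite /= y_new map_inj_in_uniq ?iota_uniq // => k j.
  by rewrite !mem_iota; apply: natr_inj_lt_pchar.
by rewrite sizeP /= size_map size_iota ltnn.
Qed.

Lemma primefield_nat_natr k : primefield_nat p (k%:R : F) = (k %% p)%N.
Proof.
have p_gt0 := prime_gt0 (pcharf_prime pcharF).
rewrite /primefield_nat; case: pickP => [n /eqP n_eq | no_n] /=.
  by apply: natr_inj_lt_pchar; rewrite ?ltn_pmod // n_eq (GRing.natr_mod_pchar pcharF).
have := no_n (Ordinal (ltn_pmod k p_gt0)).
by rewrite /= (GRing.natr_mod_pchar pcharF) eqxx.
Qed.

End PrimeSubfield.

Section AbsoluteTrace.
Variables (F : finFieldType) (p m : nat).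
Hypotheses (p_prime : prime p) (m_gt0 : (0 < m)%N) (cardF : #|F| = (p ^ (2 * m))%N).

Let pcharF : p \in [pchar F] := card_finPcharP cardF p_prime.
Local Notation Tr := (absTr p m).

Lemma absTrD (x y : F) : Tr (x + y) = Tr x + Tr y.
Proof.
rewrite /absTr -big_split; apply: eq_bigr => i _.
by rewrite exprDn_pchar // (eq_pnat _ (pcharf_eq pcharF)) pnatX pnat_id.
Qed.

Lemma absTrZ (u x : F) : u ^+ p = u -> Tr (u * x) = u * Tr x.
Proof.
move=> u_fixed; rewrite /absTr mulr_sumr; apply: eq_bigr => i _.
rewrite exprMn; congr (_ * _); elim: (val i) => [|n IHn]; first by rewrite expn0 expr1.
by rewrite expnSr exprM IHn.
Qed.

Lemma absTr_frobenius (x : F) : Tr x ^+ p = Tr x.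
Proof.
rewrite /absTr -(pFrobenius_autE pcharF) rmorph_sum /=.
have : (0 < 2 * m)%N by rewrite muln_gt0.
case E: (2 * m)%N => [//|n] _.
rewrite big_ord_recr big_ord_recl /= pFrobenius_autE -exprM -expnSr -E -cardF.
rewrite expf_card addrC expn0 expr1; congr (_ + _); apply: eq_bigr => i _.
by rewrite pFrobenius_autE -exprM -expnSr.
Qed.

Lemma absTr_natr (x : F) : exists2 k, (k < p)%N & Tr x = k%:R.
Proof. exact: frobenius_fixed_natr pcharF _ (absTr_frobenius x). Qed.

Lemma absTr_neq0 : exists x : F, Tr x != 0.
Proof.
have p_gt1 := prime_gt1 p_prime.
have : (0 < 2 * m)%N by rewrite muln_gt0.
case E: (2 * m)%N => [//|n] _.
pose P : {poly F} := \sum_(i < n.+1) 'X^(p ^ i).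
have hornerP y : P.[y] = Tr y.
  by rewrite /absTr E horner_sum; apply: eq_bigr => i _; apply: hornerXn.
have P_coef1 : P`_1 = 1.
  rewrite coef_sum big_ord_recl coefXn expn0 eqxx big1 ?addr0 // => i _.
  by rewrite coefXn eq_sym gtn_eqF // -{1}(expn0 p) ltn_exp2l.
have P_neq0 : P != 0.
  by apply: contra_neq (@oner_neq0 F) => P0; rewrite -P_coef1 P0 coef0.
have sizeP : (size P <= #|F|)%N.
  rewrite cardF E; apply: (leq_trans (size_sum _ _ _)); apply/bigmax_leqP => i _.
  by rewrite size_polyXn ltn_exp2l.
by have [x] := exists_nonroot P_neq0 sizeP; rewrite /root hornerP; exists x.
Qed.

Lemma absTr_eq1 : exists x : F, Tr x = 1.
Proof.
have [x Tr_x_neq0] := absTr_neq0.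
exists ((Tr x)^-1 * x); rewrite absTrZ ?mulVf //.
by rewrite exprVn absTr_frobenius.
Qed.

End AbsoluteTrace.

Section RootsOfUnity.
Variables (R : realType) (p : nat).
Hypothesis p_gt0 : (0 < p)%N.
Local Notation e := (e_p R p).

Lemma e_pD a b : e (a + b) = e a * e b.
Proof.
rewrite /e_p natrD mulrDr mulrDl cosD sinD.
by congr (_ +i* _); rewrite addrC.
Qed.

Lemma e_p0 : e 0 = 1.
Proof. by rewrite /e_p mulr0 mul0r cos0 sin0. Qed.

Lemma e_p_mod n : e (n %% p) = e n.
Proof.
have e_p_mulp k : e (k * p) = 1.
  elim: k => [|k IHk]; first by rewrite mul0n e_p0.
  by rewrite mulSn e_pD IHk mulr1 /e_p mulfK ?pnatr_eq0 -?lt0n // mulr_natl cos2pi sin2pi.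
by rewrite {2}(divn_eq n p) e_pD e_p_mulp mul1r.
Qed.

Lemma e_p_mul_conj n : e n * (e n)^*%R = 1.
Proof.
rewrite /e_p; set c := cos _; set s := sin _.
by apply/eqP; rewrite eq_complex /= mulrN opprK -!expr2 cos2Dsin2 mulrN mulrC addNr !eqxx.
Qed.

Lemma e_p1_neq1 : (2 < p)%N -> e 1 != 1.
Proof.
move=> p_gt2; apply: contraTneq isT => /(congr1 (@complex.Im R)) /= sin_eq0.
have p_pos : (0 : R) < p%:R by rewrite ltr0n (ltn_trans _ p_gt2).
suff : 0 < sin (2 * pi * 1%:R / p%:R) :> R by rewrite sin_eq0 ltxx.
apply: sin_gt0_pi; rewrite mulr1 divr_gt0 ?mulr_gt0 ?pi_gt0 //=.
by rewrite ltr_pdivrMr // mulrC ltr_pM2l ?pi_gt0 // ltr_nat.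
Qed.

End RootsOfUnity.

Section AdditiveCharacter.
Variables (R : realType) (F : finFieldType) (p m : nat).
Hypotheses (p_prime : prime p) (p_gt2 : (2 < p)%N) (m_gt0 : (0 < m)%N).
Hypothesis cardF : #|F| = (p ^ (2 * m))%N.

Let pcharF : p \in [pchar F] := card_finPcharP cardF p_prime.
Let p_gt0 : (0 < p)%N := prime_gt0 p_prime.
Local Notation psi := (psi R p m).

Lemma psiD (x y : F) : psi (x + y) = psi x * psi y.
Proof.
rewrite /psi (absTrD p_prime cardF).
have [a _ ->] := absTr_natr p_prime m_gt0 cardF x.
have [b _ ->] := absTr_natr p_prime m_gt0 cardF y.
by rewrite -natrD !primefield_nat_natr // !e_p_mod // e_pD.
Qed.

Lemma psi_mul_conj (x : F) : psi x * (psi x)^*%R = 1.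
Proof. exact: e_p_mul_conj. Qed.

Lemma psi_neq0 (x : F) : psi x != 0.
Proof.
by apply: contra_neq (@oner_neq0 R[i]) => psi_x0; rewrite -(psi_mul_conj x) psi_x0 mul0r.
Qed.

Lemma psi0 : psi (0 : F) = 1.
Proof. by apply: (mulfI (psi_neq0 0)); rewrite -psiD !addr0 mulr1. Qed.

Lemma psiB (x y : F) : psi (x - y) = psi x * (psi y)^*%R.
Proof.
have psiN : psi (- y) = (psi y)^*%R.
  by rewrite -[LHS]mul1r -(psi_mul_conj y) mulrAC -psiD addrN psi0 mul1r.
by rewrite psiD psiN.
Qed.

Lemma psi_nontrivial : exists c : F, psi c != 1.
Proof.
have [c Tr_c] := absTr_eq1 p_prime m_gt0 cardF.
exists c; rewrite /psi Tr_c -[1 : F]/(1%:R) primefield_nat_natr // modn_small.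
  exact: e_p1_neq1.
exact: prime_gt1.
Qed.

Lemma sum_psi : \sum_(c : F) psi c = 0.
Proof.
have [c0 psi_c0_neq1] := psi_nontrivial.
apply: (mul_fixed_eq0 psi_c0_neq1); rewrite mulr_sumr [RHS](reindex_inj (addrI c0)).
by apply: eq_bigr => c _; rewrite psiD.
Qed.

Lemma sum_psiMr (x : F) : \sum_(c : F) psi (c * x) = (x == 0)%:R * #|F|%:R.
Proof.
have [-> | x_neq0] := eqVneq x 0.
  by under eq_bigr do rewrite mulr0 psi0; rewrite sumr_const mul1r.
by rewrite mul0r -[RHS]sum_psi [RHS](reindex_inj (mulIf x_neq0)).
Qed.

Lemma parseval (f : F -> R[i]) :
  \sum_(x : F) `|\sum_(c : F) f c * psi (x * c)| ^+ 2 =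
  #|F|%:R * \sum_(c : F) `|f c| ^+ 2.
Proof.
have expand x : `|\sum_(c : F) f c * psi (x * c)| ^+ 2 =
    \sum_(c : F) \sum_(c' : F) f c * (f c')^*%R * psi (x * (c - c')).
  rewrite normCK rmorph_sum mulr_suml; apply: eq_bigr => c _.
  rewrite mulr_sumr; apply: eq_bigr => c' _.
  by rewrite rmorphM mulrACA mulrBr psiB.
under eq_bigr do rewrite expand.
rewrite exchange_big mulr_sumr; apply: eq_bigr => c _.
rewrite exchange_big (bigD1 c) //= [X in _ + X]big1 => [|c' c'_neq_c].
  by rewrite addr0 -mulr_sumr sum_psiMr subrr eqxx mul1r normCK mulrC.
by rewrite -mulr_sumr sum_psiMr subr_eq0 eq_sym (negbTE c'_neq_c) !mul0r mulr0.
Qed.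

End AdditiveCharacter.

Section MultiplicativeCharacter.
Variables (R : realType) (F : finFieldType) (chi : F -> R[i]) (d : nat).
Hypotheses (chi_mult : mult_char chi) (chi_order : char_order chi d).

Lemma chi0 : chi 0 = 0. Proof. by case: chi_mult. Qed.
Lemma chi1 : chi 1 = 1. Proof. by case: chi_mult => _ []. Qed.
Lemma chiM x y : chi (x * y) = chi x * chi y. Proof. by case: chi_mult => _ []. Qed.

Lemma chiX x n : chi (x ^+ n) = chi x ^+ n.
Proof. by elim: n => [|n IHn]; rewrite ?expr0 ?chi1 // !exprS chiM IHn. Qed.

Lemma chi_expd x : x != 0 -> chi x ^+ d = 1.
Proof. by case: chi_order => _ [chi_d _]; apply: chi_d. Qed.

Lemma chi_dpow z : z != 0 -> chi (z ^+ d) = 1.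
Proof. by move=> z_neq0; rewrite chiX chi_expd. Qed.

Lemma norm_chi x : x != 0 -> `|chi x| = 1.
Proof.
move=> x_neq0; have [d_gt0 _] := chi_order.
by apply/eqP; rewrite -(pexpr_eq1 d_gt0) // -normrX chi_expd // normr1.
Qed.

Lemma chiV x : chi x^-1 = (chi x)^*%R.
Proof.
have [-> | x_neq0] := eqVneq x 0; first by rewrite invr0 chi0 rmorph0.
have chi_mul_conj : chi x * (chi x)^*%R = 1 by rewrite -normCK norm_chi // expr1n.
by rewrite -[LHS]mulr1 -chi_mul_conj mulrA -chiM mulVf // chi1 mul1r.
Qed.

Lemma chi_eq1_dpow x : x != 0 -> chi x = 1 -> exists2 z, z != 0 & x = z ^+ d.
Proof.
move=> x_neq0 chi_x.
have q1_gt0 : (0 < #|F|.-1)%N by rewrite -(cardC1 (0 : F)) (cardD1 1) !inE oner_neq0.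
have unity (y : F) : y != 0 -> y ^+ #|F|.-1 = 1.
  move=> y_neq0; apply: (mulIf y_neq0).
  by rewrite mul1r -exprSr prednK ?expf_card // (leq_trans q1_gt0 (leq_pred _)).
have /hasP[g] : has (#|F|.-1).-primitive_root (enum (predC1 (0 : F))).
  apply: has_prim_root (enum_uniq _) _ => //; last by rewrite -cardE cardC1.
  by apply/allP => y; rewrite mem_enum unity_rootE => /unity /eqP.
rewrite mem_enum /= => g_neq0 g_prim.
have [d_gt0 [_ chi_order_min]] := chi_order.
have [i x_eq] := prim_rootP g_prim (unity _ x_neq0).
have chi_g : chi g ^+ (i %% d) = 1.
  move: chi_x; rewrite x_eq chiX {1}(divn_eq i d) exprD mulnC exprM.
  by rewrite chi_expd // expr1n mul1r.
have i_mod_d : (i %% d = 0)%N.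
  apply/eqP; apply: contraT; rewrite -lt0n => i_mod_gt0.
  have /chi_order_min[y [y_neq0]] : (0 < i %% d < d)%N by rewrite i_mod_gt0 ltn_pmod.
  have [j ->] := prim_rootP g_prim (unity _ y_neq0).
  by rewrite chiX -exprM mulnC exprM chi_g expr1n eqxx.
exists (g ^+ (i %/ d)); first by rewrite expf_neq0.
by rewrite x_eq {1}(divn_eq i d) i_mod_d addn0 exprM.
Qed.

Hypothesis d_gt1 : (1 < d)%N.

Lemma chi_nontrivial : exists2 x, x != 0 & chi x != 1.
Proof.
have [_ [_ /(_ 1%N d_gt1)[x [x_neq0]]]] := chi_order.
by rewrite expr1; exists x.
Qed.

Lemma sum_chi : \sum_(c : F) chi c = 0.
Proof.
have [x0 x0_neq0 chi_x0_neq1] := chi_nontrivial.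
apply: (mul_fixed_eq0 chi_x0_neq1); rewrite mulr_sumr [RHS](reindex_inj (mulfI x0_neq0)).
by apply: eq_bigr => c _; rewrite chiM.
Qed.

End MultiplicativeCharacter.

Lemma same_argP (R : realType) (u v : R[i]) :
  v != 0 -> same_arg u v <-> exists2 k, 0 <= k & u = k * v.
Proof.
move=> v_neq0; split => [[-> | [v_eq0 | [r [r_gt0 ->]]]] | [k k_ge0 ->]].
- by exists 0; rewrite ?mul0r.
- by rewrite v_eq0 eqxx in v_neq0.
- by exists r%:C; rewrite ?ler0c ?ltW.
- have [-> | k_neq0] := eqVneq k 0; first by left; rewrite mul0r.
  right; right; have /complex_realP[r k_eq] : k \is Num.real by apply: ger0_real.
  by exists r; split; [rewrite -ltcR -k_eq lt0r k_neq0 | rewrite k_eq].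
Qed.

Lemma gp_clique_card_sqr_le (F : finFieldType) (d : nat) (nu : F) (B : {set F}) :
  nu != 0 -> (forall z : F, z != 0 -> nu != z ^+ d) -> gp_clique d B ->
  (#|B| ^ 2 <= #|F|)%N.
Proof.
move=> nu_neq0 nu_not_dpow B_clique.
pose f (ab : F * F) := ab.1 + nu * ab.2.
have f_inj : {in setX B B &, injective f}.
  move=> [a b] [a' b'] /setXP[a_B b_B] /setXP[a'_B b'_B]; rewrite /f /= => f_eq.
  have [b_eq | b_neq] := eqVneq b b'; first by move: f_eq; rewrite b_eq => /addIr ->.
  have [a_eq | a_neq] := eqVneq a a'.
    move: f_eq; rewrite a_eq => /addrI/(mulfI nu_neq0) b_eq.
    by rewrite b_eq eqxx in b_neq.
  have [_ [z [z_neq0 z_eq]]] := B_clique a a' a_B a'_B a_neq.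
  have [_ [w [w_neq0 w_eq]]] : gp_adj d b' b by apply: B_clique; rewrite // eq_sym.
  have diff : a - a' = nu * (b' - b).
    by rewrite mulrBr -[a](addrK (nu * b)) f_eq; ring.
  have /eqP := nu_not_dpow (z / w) (mulf_neq0 z_neq0 (invr_neq0 w_neq0)).
  by rewrite expr_div_n -z_eq -w_eq diff mulfK // subr_eq0 eq_sym.
have := max_card (f @: setX B B).
by rewrite card_in_imset // cardsX mulnn.
Qed.

Section CharacterSums.
Variables (R : realType) (F : finFieldType) (p m : nat) (chi : F -> R[i]) (d : nat).
Hypotheses (p_prime : prime p) (p_gt2 : (2 < p)%N) (m_gt0 : (0 < m)%N).
Hypothesis cardF : #|F| = (p ^ (2 * m))%N.
Hypotheses (chi_mult : mult_char chi) (chi_order : char_order chi d) (d_gt1 : (1 < d)%N).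

Local Notation psi := (psi R p m).
Local Notation G := (gauss_sum p m chi).
Local Notation S A := (S_sum R p m A).
Local Notation sqrt_q := ((p ^ m)%:R : R[i]).

Lemma gauss_sum_twist x : \sum_(c : F) chi c * psi (x * c) = chi x^-1 * G.
Proof.
have [-> | x_neq0] := eqVneq x 0.
  under eq_bigr do rewrite mul0r (psi0 R p_prime m_gt0 cardF) mulr1.
  by rewrite (sum_chi chi_mult chi_order d_gt1) invr0 (chi0 chi_mult) mul0r.
rewrite /gauss_sum mulr_sumr (reindex_inj (mulfI (invr_neq0 x_neq0))).
by apply: eq_bigr => c _; rewrite mulVKf // (chiM chi_mult) mulrA.
Qed.

Lemma norm_gauss_sum_sqr : `|G| ^+ 2 = #|F|%:R.
Proof.
have chi_mass_gt0 : 0 < \sum_(c : F) `|chi c| ^+ 2.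
  rewrite (bigD1 1) //= (norm_chi chi_order) ?oner_neq0 // expr1n ltr_wpDr ?ltr01 //.
  by apply: sumr_ge0 => c _; apply: exprn_ge0.
apply: (mulIf (lt0r_neq0 chi_mass_gt0)); rewrite -(parseval p_prime p_gt2 m_gt0 cardF).
rewrite mulr_sumr [RHS](reindex_inj invr_inj); apply: eq_bigr => x _.
by rewrite gauss_sum_twist invrK normrM exprMn mulrC.
Qed.

Lemma S_sum0 (A : {set F}) : S A 0 = #|A|%:R.
Proof.
rewrite /S_sum; under eq_bigr do rewrite mulr0 (psi0 R p_prime m_gt0 cardF).
by rewrite sumr_const.
Qed.

Lemma sum_norm_S_sum_sqr (A : {set F}) : \sum_(c : F) `|S A c| ^+ 2 = #|F|%:R * #|A|%:R.
Proof.
have S_sumE c : S A c = \sum_(a : F) (a \in A)%:R * psi (c * a).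
  rewrite /S_sum big_mkcond; apply: eq_bigr => a _.
  by case: (a \in A); rewrite ?mul1r ?mul0r // mulrC.
under eq_bigr do rewrite S_sumE.
rewrite (parseval p_prime p_gt2 m_gt0 cardF); congr (_ * _).
rewrite -sumr_const [RHS]big_mkcond; apply: eq_bigr => a _.
by case: (a \in A); rewrite ?normr1 ?normr0 ?expr1n ?expr0n.
Qed.

Lemma sum_chi_norm_S_sum (A : {set F}) :
  \sum_(c : F) chi c * `|S A c| ^+ 2 =
  G * \sum_(a in A) \sum_(b in A) chi (a - b)^-1.
Proof.
have norm_S_sqr c : `|S A c| ^+ 2 = \sum_(a in A) \sum_(b in A) psi ((a - b) * c).
  rewrite normCK /S_sum rmorph_sum mulr_suml; apply: eq_bigr => a _.
  rewrite mulr_sumr; apply: eq_bigr => b _.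
  by rewrite mulrBl (psiB R p_prime m_gt0 cardF).
under eq_bigr do rewrite norm_S_sqr mulr_sumr.
rewrite exchange_big mulr_sumr; apply: eq_bigr => a _.
under eq_bigr do rewrite mulr_sumr.
rewrite exchange_big mulr_sumr; apply: eq_bigr => b _.
by rewrite gauss_sum_twist mulrC.
Qed.

Lemma sqrt_q_gt1 : 1 < sqrt_q.
Proof. by rewrite ltr1n -{1}(expn0 p) ltn_exp2l // prime_gt1. Qed.

Lemma sqrt_q_neq0 : sqrt_q != 0.
Proof. by rewrite gt_eqF // (lt_trans ltr01 sqrt_q_gt1). Qed.

Lemma q_sub_sqrt_q_gt0 : 0 < sqrt_q ^+ 2 - sqrt_q.
Proof.
have -> : sqrt_q ^+ 2 - sqrt_q = sqrt_q * (sqrt_q - 1) by ring.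
by rewrite mulr_gt0 ?subr_gt0 ?sqrt_q_gt1 // (lt_trans ltr01 sqrt_q_gt1).
Qed.

Lemma natr_card : #|F|%:R = sqrt_q ^+ 2.
Proof. by rewrite cardF mulnC expnM natrX. Qed.

Lemma sqrtqE : sqrtq R F = sqrt_q.
Proof.
rewrite /sqrtq cardF mulnC expnM natrX sqrtr_sqr ger0_norm //.
by rewrite -[RHS](rmorph_nat (@real_complex R)).
Qed.

Lemma norm_gauss_sum : `|G| = sqrt_q.
Proof.
by apply/eqP; rewrite -(eqrXn2 (n := 2)) // -natr_card norm_gauss_sum_sqr.
Qed.

Lemma gauss_sum_neq0 : G != 0.
Proof. by rewrite -normr_eq0 norm_gauss_sum sqrt_q_neq0. Qed.

Lemma gp_clique_card_le (B : {set F}) : gp_clique d B -> (#|B| <= p ^ m)%N.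
Proof.
move=> B_clique; have [nu nu_neq0 chi_nu] := chi_nontrivial chi_order d_gt1.
rewrite -leq_sqr -expnM mulnC -cardF; apply: gp_clique_card_sqr_le nu_neq0 _ B_clique.
by move=> z z_neq0; apply: contra_neq chi_nu => ->; apply: chi_dpow.
Qed.

Section FixedSet.
Variable A : {set F}.
Hypothesis cardA : #|A| = (p ^ m)%N.
Local Notation z c := (chi c * `|S A c| ^+ 2).

Lemma sum_norm_chi_S_sum : \sum_(c : F) `|z c| = sqrt_q * (sqrt_q ^+ 2 - sqrt_q).
Proof.
have := sum_norm_S_sum_sqr A; rewrite (bigD1 0) //= S_sum0 cardA natr_card => total.
rewrite (bigD1 0) //= (chi0 chi_mult) mul0r normr0 add0r.
rewrite (eq_bigr (fun c => `|S A c| ^+ 2)) => [|c c_neq0]; last first.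
  by rewrite normrM (norm_chi chi_order) // mul1r normrX normr_id.
by apply: (addrI (`|sqrt_q| ^+ 2)); rewrite total ger0_norm //; ring.
Qed.

Lemma sum_offdiag : \sum_(a in A) \sum_(b in A) (a != b)%:R = sqrt_q ^+ 2 - sqrt_q.
Proof.
have row a : a \in A -> \sum_(b in A) (a != b)%:R = sqrt_q - 1.
  move=> a_A; apply: (addIr 1); rewrite subrK -cardA -sumr_const.
  rewrite (bigD1 a a_A) [RHS](bigD1 a a_A) /= eqxx add0r addrC; congr (_ + _).
  by apply: eq_bigr => b /andP[_ b_neq_a]; rewrite eq_sym b_neq_a.
by rewrite (eq_bigr _ row) sumr_const cardA -mulr_natr; ring.
Qed.

Lemma gp_clique_chi_diff a b : gp_clique d A -> a \in A -> b \in A ->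
  chi (a - b)^-1 = (a != b)%:R.
Proof.
move=> A_clique a_A b_A; have [-> | a_neq_b] := eqVneq a b.
  by rewrite subrr invr0 (chi0 chi_mult).
have [_ [w [w_neq0 ->]]] := A_clique a b a_A b_A a_neq_b.
by rewrite -exprVn chi_dpow ?invr_neq0.
Qed.

Lemma gp_clique_same_arg : gp_clique d A -> forall c, c != 0 -> same_arg (z c) G.
Proof.
move=> A_clique.
have sum_z : \sum_(c : F) z c = G * (sqrt_q ^+ 2 - sqrt_q).
  rewrite sum_chi_norm_S_sum -sum_offdiag; congr (_ * _).
  by apply: eq_bigr => a a_A; apply: eq_bigr => b b_A; apply: gp_clique_chi_diff.
have : `|\sum_(c : F) z c| = \sum_(c : F) `|z c|.
  rewrite sum_z sum_norm_chi_S_sum normrM norm_gauss_sum.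
  by rewrite ger0_norm // ltW ?q_sub_sqrt_q_gt0.
case/normC_sum_eq => t _ z_eq.
have G_eq : G = sqrt_q * t.
  apply: (mulIf (lt0r_neq0 q_sub_sqrt_q_gt0)); rewrite -sum_z mulrAC -sum_norm_chi_S_sum.
  by rewrite mulr_suml; apply: eq_bigr => c _; apply: z_eq.
move=> c _; apply/(same_argP _ gauss_sum_neq0); exists (`|z c| / sqrt_q).
  by rewrite divr_ge0 ?ler0n.
by rewrite G_eq [RHS]mulrA divfK ?sqrt_q_neq0 //; apply: z_eq.
Qed.

Lemma same_arg_gp_clique : (forall c, c != 0 -> same_arg (z c) G) -> gp_clique d A.
Proof.
move=> A_arg.
have z_eq c : z c = `|z c| / sqrt_q * G.
  have [-> | c_neq0] := eqVneq c 0.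
    by rewrite (chi0 chi_mult) !mul0r normr0 !mul0r.
  have [k k_ge0 ->] := (same_argP _ gauss_sum_neq0).1 (A_arg c c_neq0).
  by rewrite normrM norm_gauss_sum (ger0_norm k_ge0) mulfK ?sqrt_q_neq0.
have sum_z : \sum_(c : F) z c = (sqrt_q ^+ 2 - sqrt_q) * G.
  rewrite (eq_bigr _ (fun c _ => z_eq c)) -!mulr_suml sum_norm_chi_S_sum.
  by rewrite [sqrt_q * _]mulrC mulfK ?sqrt_q_neq0.
have sum_chi_diff : \sum_(a in A) \sum_(b in A) chi (a - b)^-1 =
                    \sum_(a in A) \sum_(b in A) (a != b)%:R.
  by apply: (mulfI gauss_sum_neq0); rewrite -sum_chi_norm_S_sum sum_z sum_offdiag mulrC.
have chi_diff_le a b : `|chi (a - b)^-1| <= (a != b)%:R.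
  have [-> | a_neq_b] := eqVneq a b; first by rewrite subrr invr0 (chi0 chi_mult) normr0.
  by rewrite (norm_chi chi_order) // invr_neq0 // subr_eq0.
have row_eq a : a \in A -> \sum_(b in A) chi (a - b)^-1 = \sum_(b in A) (a != b)%:R.
  apply: (normC_sum_upper _ sum_chi_diff) => a' _.
  by apply: le_trans (ler_norm_sum _ _ _) _; apply: ler_sum => b _.
have chi_diff_eq a b : a \in A -> b \in A -> chi (a - b)^-1 = (a != b)%:R.
  by move=> a_A; apply: (normC_sum_upper _ (row_eq a a_A)) => b' _.
rewrite /gp_clique => a b a_A b_A a_neq_b; split => //.
have chi_ab : chi (a - b) = 1.
  by rewrite -[a - b]invrK (chiV chi_mult chi_order) chi_diff_eq // a_neq_b rmorph1.
have [|w w_neq0 ab_eq] := chi_eq1_dpow chi_mult chi_order _ chi_ab.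
  by rewrite subr_eq0.
by exists w.
Qed.

Lemma gp_max_cliqueP : gp_max_clique d A <-> forall c, c != 0 -> same_arg (z c) G.
Proof.
split => [[A_clique _] | A_arg]; first exact: gp_clique_same_arg.
split=> [|B /gp_clique_card_le]; first exact: same_arg_gp_clique.
by rewrite cardA.
Qed.

Lemma exists_S_sum_neq0 : exists2 c, c != 0 & S A c != 0.
Proof.
have [c /andP[c_neq0 Sc_neq0] | S_eq0] := pickP (fun c => (c != 0) && (S A c != 0)).
  by exists c.
have := sum_norm_chi_S_sum; rewrite big1 => [/esym/eqP | c _].
  by rewrite mulf_eq0 (negbTE sqrt_q_neq0) (negbTE (lt0r_neq0 q_sub_sqrt_q_gt0)).
have [-> | c_neq0] := eqVneq c 0; first by rewrite (chi0 chi_mult) mul0r normr0.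
move: (S_eq0 c); rewrite /= c_neq0 => /negbFE/eqP ->.
by rewrite normr0 expr0n mulr0 normr0.
Qed.

Lemma same_arg_chi_eq_eps c : c != 0 -> same_arg (z c) G -> S A c != 0 ->
  chi c = eps_gauss p m chi.
Proof.
move=> c_neq0 /(same_argP _ gauss_sum_neq0)[k k_ge0 z_eq] Sc_neq0.
have normS : `|S A c| ^+ 2 = k * sqrt_q.
  move: (congr1 Num.norm z_eq); rewrite normrM (norm_chi chi_order) // mul1r.
  by rewrite normrX normr_id normrM norm_gauss_sum (ger0_norm k_ge0).
have normS_neq0 : `|S A c| ^+ 2 != 0 by rewrite expf_eq0 normr_eq0 (negbTE Sc_neq0) andbF.
apply: (mulIf normS_neq0).
rewrite /eps_gauss sqrtqE z_eq normS [k * sqrt_q]mulrC mulrA.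
by rewrite divfK ?sqrt_q_neq0 // mulrC.
Qed.

Lemma gp_max_clique_S_sum_eq0 : gp_max_clique d A ->
  forall c, c != 0 -> chi c != eps_gauss p m chi -> S A c = 0.
Proof.
move=> /gp_max_cliqueP A_arg c c_neq0; apply: contraNeq => Sc_neq0.
by rewrite (same_arg_chi_eq_eps c_neq0 (A_arg c c_neq0) Sc_neq0).
Qed.

End FixedSet.

Lemma gp_clique_number_eps_gauss : gp_clique_number F d (p ^ m) ->
  [/\ eps_gauss p m chi ^+ d = 1, pure_num G & G = eps_gauss p m chi * sqrtq R F].
Proof.
case=> [[A [A_clique cardA]] _].
have [c c_neq0 Sc_neq0] := exists_S_sum_neq0 cardA.
have A_arg := gp_clique_same_arg cardA A_clique c_neq0.
have eps_eq := same_arg_chi_eq_eps c_neq0 A_arg Sc_neq0.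
have G_eq : G = chi c * sqrt_q by rewrite eps_eq /eps_gauss sqrtqE divfK ?sqrt_q_neq0.
rewrite -eps_eq sqrtqE; split=> //; first exact: chi_expd.
exists (Posz d); split; first by rewrite eqz_nat -lt0n ltnW.
by rewrite -exprnP G_eq exprMn chi_expd // mul1r rpredX // realn.
Qed.

End CharacterSums.

Theorem theorem1p9 (R : realType) (F : finFieldType) (p m d : nat)
  (chi : F -> R[i]) (A : {set F}) :
  prime p -> odd p -> (0 < m)%N -> #|F| = (p ^ (2 * m))%N ->
  (1 < d)%N -> #|F| = 1 %[mod 2 * d] ->
  mult_char chi -> char_order chi d ->
  #|A| = (p ^ m)%N ->
  (@gp_max_clique F d A <->
     (forall c : F, c != 0 ->
        @same_arg R (chi c * `|@S_sum R F p m A c| ^+ 2) (@gauss_sum R F p m chi)))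
  /\
  (@gp_clique_number F d (p ^ m)%N ->
     @eps_gauss R F p m chi ^+ d = 1 /\
     @pure_num R (@gauss_sum R F p m chi) /\
     @gauss_sum R F p m chi = @eps_gauss R F p m chi * @sqrtq R F /\
     (@gp_max_clique F d A ->
        forall c : F, c != 0 -> chi c != @eps_gauss R F p m chi ->
          @S_sum R F p m A c = 0)).
Proof.
(* q = 1 mod 2d only makes GP(q,d) undirected; [gp_clique] already
   constrains both orders of every pair. *)
move=> p_prime p_odd m_gt0 cardF d_gt1 _ chi_mult chi_order cardA.
have p_gt2 := odd_prime_gt2 p_odd p_prime.
split; first by apply: gp_max_cliqueP.
move=> clique_number.
have [eps_expd G_pure G_eq] := gp_clique_number_eps_gauss p_prime p_gt2 m_gt0 cardF
  chi_mult chi_order d_gt1 clique_number.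
by do !split => //; apply: gp_max_clique_S_sum_eq0.
Qed.
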